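(* Let $m\ge4$ and let $p=(p_1,\dots,p_m)$, $q=(q_1,\dots,q_m)$ be ordered $m$-tuples of distinct points of $\partial\mathbf H^n_{\mathbb H}$, with invariants computed using lifts whose Gram matrices are semi-normalized. If the $(d+1)$-tuples $F(p)=(u_0,\mathbb X_1,\dots,\mathbb X_d)$ and $F(q)$, $d=\frac{m(m-3)}{2}$, are $\mathrm{Sp}(1)$-congruent and $\mathbb A_{23}(p)=\mathbb A_{23}(q)$, then $p$ and $q$ are $\mathrm{PSp}(n,1)$-congruent. That is, the $\mathrm{Sp}(1)$-congruence class of $F$ and $\mathbb A_{23}$ determine the $\mathrm{PSp}(n,1)$-congruence class of $p$.
   Context: $\mathbb H^{n,1}$ is the right quaternionic vector space $\mathbb H^{n+1}$ with Hermitian form $\langle\mathbf z,\mathbf w\rangle=\bar w_{n+1}z_1+\bar w_2z_2+\cdots+\bar w_nz_n+\bar w_1z_{n+1}$; $\partial\mathbf H^n_{\mathbb H}$ is the set of quaternionic lines of nonzero null vectors; $\mathrm{PSp}(n,1)=\mathrm{Sp}(n,1)/\{\pm I\}$ where $\mathrm{Sp}(n,1)$ preserves the form. For a lift $(\mathbf p_1,\dots,\mathbf p_m)$ the Gram matrix is $g_{kj}=\langle\mathbf p_j,\mathbf p_k\rangle$; it is semi-normalized if $g_{1j}=1$ for $2\le j\le m$ and $|g_{23}|=1$ (diagonal entries are $0$). Cross ratio $\mathbb X(z_1,z_2,z_3,z_4)=\langle\mathbf z_3,\mathbf z_1\rangle\langle\mathbf z_3,\mathbf z_2\rangle^{-1}\langle\mathbf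 z_4,\mathbf z_2\rangle\langle\mathbf z_4,\mathbf z_1\rangle^{-1}$; $\mathbb X_1,\dots,\mathbb X_d$ list in a fixed order $\mathbb X(\mathbf p_1,\mathbf p_2,\mathbf p_3,\mathbf p_j)$, $\mathbb X(\mathbf p_1,\mathbf p_3,\mathbf p_2,\mathbf p_j)$ ($4\le j\le m$) and $\mathbb X(\mathbf p_1,\mathbf p_k,\mathbf p_2,\mathbf p_j)$ ($4\le k<j\le m$). $\mathbb A_{23}=\arccos\frac{\Re(-\langle\mathbf p_1,\mathbf p_2,\mathbf p_3\rangle)}{|\langle\mathbf p_1,\mathbf p_2,\mathbf p_3\rangle|}$ with $\langle\mathbf z_1,\mathbf z_2,\mathbf z_3\rangle=\langle\mathbf z_1,\mathbf z_2\rangle\langle\mathbf z_2,\mathbf z_3\rangle\langle\mathbf z_3,\mathbf z_1\rangle$. $u_0=\Im(g_{23})/|\Im(g_{23})|$ if $\mathbb A_{23}\ne0$, else $u_0=0$. Tuples $F,F'$ are $\mathrm{Sp}(1)$-congruent if $F'=\mu F\bar\mu$ componentwise for some unit quaternion $\mu$. *)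

From mathcomp Require Import all_boot all_order all_algebra.
From mathcomp Require Import reals trigo.
Set Implicit Arguments. Unset Strict Implicit. Unset Printing Implicit Defensive.
Import Order.TTheory GRing.Theory Num.Theory.
Local Open Scope ring_scope.

Record quat (R : Type) := Quat { qre : R; qi : R; qj : R; qk : R }.

Section Quaternions.
Variable R : realType.
Local Notation H := (quat R).

Definition q0 : H := Quat 0 0 0 0.
Definition q1 : H := Quat 1 0 0 0.
Definition qadd (x y : H) : H :=
  Quat (qre x + qre y) (qi x + qi y) (qj x + qj y) (qk x + qk y).
Definition qopp (x : H) : H := Quat (- qre x) (- qi x) (- qj x) (- qk x).
Definition qmul (x y : H) : H :=
  let: Quat a1 b1 c1 d1 := x in let: Quat a2 b2 c2 d2 := y in
  Quat (a1*a2 - b1*b2 - c1*c2 - d1*d2)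
       (a1*b2 + b1*a2 + c1*d2 - d1*c2)
       (a1*c2 - b1*d2 + c1*a2 + d1*b2)
       (a1*d2 + b1*c2 - c1*b2 + d1*a2).
Definition qconj (x : H) : H := Quat (qre x) (- qi x) (- qj x) (- qk x).
Definition qscale (r : R) (x : H) : H := Quat (r * qre x) (r * qi x) (r * qj x) (r * qk x).
Definition qnorm2 (x : H) : R := qre x ^+ 2 + qi x ^+ 2 + qj x ^+ 2 + qk x ^+ 2.
Definition qabs (x : H) : R := Num.sqrt (qnorm2 x).
Definition qinv (x : H) : H := qscale (qnorm2 x)^-1 (qconj x).
Definition qIm (x : H) : H := Quat 0 (qi x) (qj x) (qk x).
Definition qsum (s : seq H) : H := foldr qadd q0 s.

(** Vectors of H^{n,1} = H^{n+1}, coordinates indexed 0..n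
    (paper's coordinate k is index k-1). *)
Definition qvec (n : nat) := 'I_n.+1 -> H.
Definition qmat (n : nat) := 'I_n.+1 -> 'I_n.+1 -> H.

Definition vscale n (z : qvec n) (l : H) : qvec n := fun i => qmul (z i) l.
Definition mact n (A : qmat n) (z : qvec n) : qvec n :=
  fun i => qsum [seq qmul (A i j) (z j) | j <- enum 'I_n.+1].

(** <z,w> = conj(w_{n+1}) z_1 + conj(w_2) z_2 + ... + conj(w_n) z_n + conj(w_1) z_{n+1} *)
Definition hform n (z w : qvec n) : H :=
  qadd (qmul (qconj (w ord_max)) (z ord0))
   (qadd (qsum [seq qmul (qconj (w i)) (z i) | i <- [seq i : 'I_n.+1 <- enum 'I_n.+1 | (0 < nat_of_ord i < n)%N]])
         (qmul (qconj (w ord0)) (z ord_max))).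

Definition vnonzero n (z : qvec n) : Prop := exists i, z i <> q0.
(** nonzero null vector: a lift of a point of the boundary of H^n_H *)
Definition null_lift n (z : qvec n) : Prop := vnonzero z /\ hform z z = q0.
Definition same_point n (z w : qvec n) : Prop :=
  exists l : H, l <> q0 /\ w = vscale z l.

Definition in_Sp n (A : qmat n) : Prop :=
  (forall z w : qvec n, hform (mact A z) (mact A w) = hform z w) /\
  exists B : qmat n, forall z : qvec n, mact B (mact A z) = z /\ mact A (mact B z) = z.

(** Tuples of points are encoded by lifts P : nat -> qvec n, P j being the lift
    of p_{j+1} (only indices j < m matter). *)
Definition distinct_boundary_tuple n (m : nat) (P : nat -> qvec n) : Prop :=
  (forall j, (j < m)%N -> null_lift (P j)) /\
  (forall i j, (i < m)%N -> (j < m)%N -> i <> j -> ~ same_point (P i) (P j)).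

(** Gram matrix g_{kj} = <p_j, p_k> (paper's 1-based indices). *)
Definition gram n (P : nat -> qvec n) (k j : nat) : H := hform (P j.-1) (P k.-1).

Definition semi_normalized n (m : nat) (P : nat -> qvec n) : Prop :=
  (forall j, (2 <= j <= m)%N -> gram P 1 j = q1) /\ qabs (gram P 2 3) = 1.

Definition cross_ratio n (z1 z2 z3 z4 : qvec n) : H :=
  qmul (qmul (qmul (hform z3 z1) (qinv (hform z3 z2))) (hform z4 z2))
       (qinv (hform z4 z1)).

Definition triple n (z1 z2 z3 : qvec n) : H :=
  qmul (qmul (hform z1 z2) (hform z2 z3)) (hform z3 z1).

Definition A23 n (P : nat -> qvec n) : R :=
  acos (qre (qopp (triple (P 0) (P 1) (P 2))) / qabs (triple (P 0) (P 1) (P 2))).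

Definition u0 n (P : nat -> qvec n) : H :=
  if A23 P != 0 then qscale (qabs (qIm (gram P 2 3)))^-1 (qIm (gram P 2 3)) else q0.

(** The (d+1)-tuple F = (u0, X_1, ..., X_d), d = m(m-3)/2, in the fixed order:
    X(p1,p2,p3,pj) (4<=j<=m), X(p1,p3,p2,pj) (4<=j<=m),
    X(p1,pk,p2,pj) (4<=k<j<=m, lexicographic in (k,j)).
    (0-based: p_i is P (i-1).) *)
Definition Finv n (m : nat) (P : nat -> qvec n) : seq H :=
  u0 P ::
  [seq cross_ratio (P 0) (P 1) (P 2) (P j) | j <- iota 3 (m - 3)] ++
  [seq cross_ratio (P 0) (P 2) (P 1) (P j) | j <- iota 3 (m - 3)] ++
  flatten [seq [seq cross_ratio (P 0) (P k) (P 1) (P j) | j <- iota k.+1 (m - k.+1)]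
          | k <- iota 3 (m - 3)].

Definition sp1_congruent (F F' : seq H) : Prop :=
  exists mu : H, qabs mu = 1 /\ F' = [seq qmul (qmul mu x) (qconj mu) | x <- F].

(** PSp(n,1)-congruence of m-tuples of boundary points (the action of PSp(n,1)
    on points is that of Sp(n,1)): some A in Sp(n,1) maps p_i to q_i. *)
Definition psp_congruent n (m : nat) (P Q : nat -> qvec n) : Prop :=
  exists A : qmat n, in_Sp A /\
    forall i, (i < m)%N -> same_point (mact A (P i)) (Q i).

End Quaternions.

(* For semi-normalized lifts (g_{1j} = 1) every Gram entry is 0, 1, g_{23}, or an
   earlier entry times a cross ratio:
     <p_j,p_2> = g_{23} X(p_1,p_2,p_3,p_j),   <p_j,p_3> = conj(g_{23}) X(p_1,p_3,p_2,p_j),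
     <p_j,p_k> = <p_2,p_k> X(p_1,p_k,p_2,p_j).
   The unit quaternion g_{23} has real part -cos A_{23} and u_0 is the direction of its
   imaginary part, so the hypotheses give Gram(q) = mu Gram(p) conj(mu): the lifts
   p_i conj(mu) have the same Gram matrix as the q_i.  A Witt-type extension argument then
   maps p_i conj(mu) to q_i one point at a time by isometries of the form, composing
   transvections that move a null vector x to a null vector y and fix every v with
   <v,x> = <v,y>. *)

From HB Require Import structures.
From mathcomp Require Import all_boot all_order all_algebra.
From mathcomp Require Import reals trigo boolp.
From mathcomp Require Import ring lra zify.
Set Implicit Arguments. Unset Strict Implicit. Unset Printing Implicit Defensive.
Import Order.TTheory GRing.Theory Num.Theory.
Local Open Scope ring_scope.

Section QuaternionRing.
Variable R : realType.
Implicit Types x y z : quat R.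

Definition quat_tuple x := (qre x, qi x, qj x, qk x).
Definition tuple_quat (p : R * R * R * R) := let: (a, b, c, d) := p in Quat a b c d.
Lemma quat_tupleK : cancel quat_tuple tuple_quat. Proof. by case. Qed.
HB.instance Definition _ := Choice.copy (quat R) (can_type quat_tupleK).

Lemma quat_ext x y :
  qre x = qre y -> qi x = qi y -> qj x = qj y -> qk x = qk y -> x = y.
Proof. by case: x; case: y => /= ? ? ? ? ? ? ? ? -> -> -> ->. Qed.

Ltac quat_ring := apply: quat_ext; rewrite /=; ring.

Lemma qaddA : associative (@qadd R).
Proof. by move=> [? ? ? ?] [? ? ? ?] [? ? ? ?]; quat_ring. Qed.
Lemma qaddC : commutative (@qadd R).
Proof. by move=> [? ? ? ?] [? ? ? ?]; quat_ring. Qed.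
Lemma qadd0 : left_id (q0 R) (@qadd R).
Proof. by move=> [? ? ? ?]; quat_ring. Qed.
Lemma qaddN : left_inverse (q0 R) (@qopp R) (@qadd R).
Proof. by move=> [? ? ? ?]; quat_ring. Qed.
Lemma qmulA : associative (@qmul R).
Proof. by move=> [? ? ? ?] [? ? ? ?] [? ? ? ?]; quat_ring. Qed.
Lemma qmul1 : left_id (q1 R) (@qmul R).
Proof. by move=> [? ? ? ?]; quat_ring. Qed.
Lemma qmulr1 : right_id (q1 R) (@qmul R).
Proof. by move=> [? ? ? ?]; quat_ring. Qed.
Lemma qmulDl : left_distributive (@qmul R) (@qadd R).
Proof. by move=> [? ? ? ?] [? ? ? ?] [? ? ? ?]; quat_ring. Qed.
Lemma qmulDr : right_distributive (@qmul R) (@qadd R).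
Proof. by move=> [? ? ? ?] [? ? ? ?] [? ? ? ?]; quat_ring. Qed.
Lemma q1_neq0 : q1 R != q0 R.
Proof. by apply/eqP => /(congr1 (@qre R)) /= /eqP; rewrite oner_eq0. Qed.

HB.instance Definition _ := GRing.isNzRing.Build (quat R) qaddA qaddC qadd0 qaddN
  qmulA qmul1 qmulr1 qmulDl qmulDr q1_neq0.

Lemma qmulE x y : qmul x y = x * y. Proof. by []. Qed.

Lemma qsumE (s : seq (quat R)) : qsum s = \sum_(x <- s) x.
Proof. by elim: s => [|a s IH]; rewrite ?big_nil ?big_cons //= -IH. Qed.

Definition rq (r : R) : quat R := Quat r 0 0 0.

Lemma rqC r x : rq r * x = x * rq r. Proof. by case: x => ? ? ? ?; quat_ring. Qed.
Lemma rqM r s : rq r * rq s = rq (r * s). Proof. by quat_ring. Qed.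
Lemma rq1 : rq 1 = 1. Proof. by quat_ring. Qed.
Lemma qscaleE r x : qscale r x = rq r * x. Proof. by case: x => ? ? ? ?; quat_ring. Qed.

Lemma qconjM x y : qconj (x * y) = qconj y * qconj x.
Proof. by case: x => ? ? ? ?; case: y => ? ? ? ?; quat_ring. Qed.
Lemma qconjD x y : qconj (x + y) = qconj x + qconj y.
Proof. by case: x => ? ? ? ?; case: y => ? ? ? ?; quat_ring. Qed.
Lemma qconjN x : qconj (- x) = - qconj x. Proof. by case: x => ? ? ? ?; quat_ring. Qed.
Lemma qconjK x : qconj (qconj x) = x. Proof. by case: x => ? ? ? ?; quat_ring. Qed.
Lemma qconj0 : qconj 0 = 0 :> quat R. Proof. by quat_ring. Qed.
Lemma qconj1 : qconj 1 = 1 :> quat R. Proof. by quat_ring. Qed.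
Lemma qconj_eq0 x : (qconj x == 0) = (x == 0).
Proof. by apply/eqP/eqP => h; [rewrite -[x]qconjK h qconj0 | rewrite h qconj0]. Qed.
Lemma qconj_sum (I : Type) (s : seq I) (F : I -> quat R) :
  qconj (\sum_(i <- s) F i) = \sum_(i <- s) qconj (F i).
Proof. by elim: s => [|a s IH]; rewrite ?big_nil ?big_cons ?qconj0 // qconjD IH. Qed.
Lemma qconj_real x : qconj x = x -> x = rq (qre x).
Proof. by case: x => a b c d [] *; apply: quat_ext => /=; lra. Qed.

Lemma qmul_conj x : x * qconj x = rq (qnorm2 x).
Proof. by case: x => ? ? ? ?; rewrite /qnorm2; quat_ring. Qed.
Lemma qconj_mul x : qconj x * x = rq (qnorm2 x).
Proof. by case: x => ? ? ? ?; rewrite /qnorm2; quat_ring. Qed.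

Lemma qnorm2_ge0 x : 0 <= qnorm2 x.
Proof. by rewrite /qnorm2 !addr_ge0 ?sqr_ge0. Qed.
Lemma qnorm2_eq0 x : (qnorm2 x == 0) = (x == 0).
Proof.
apply/eqP/eqP => [|->]; last by rewrite /qnorm2 /= expr0n /= !addr0.
case: x => a b c d; rewrite /qnorm2 /= => N0.
have := sqr_ge0 a; have := sqr_ge0 b; have := sqr_ge0 c; have := sqr_ge0 d => *.
have sq0 (r : R) : r ^+ 2 = 0 -> r = 0 by move/eqP; rewrite sqrf_eq0 => /eqP.
suff [-> -> -> ->] : [/\ a = 0, b = 0, c = 0 & d = 0] by [].
by split; apply: sq0; lra.
Qed.
Lemma qnorm2_conj x : qnorm2 (qconj x) = qnorm2 x.
Proof. by case: x => ? ? ? ?; rewrite /qnorm2 /=; ring. Qed.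
Lemma qnorm2_qabs1 x : qabs x = 1 -> qnorm2 x = 1.
Proof. by move=> x1; rewrite -(sqr_sqrtr (qnorm2_ge0 x)) -/(qabs x) x1 expr1n. Qed.

Lemma qre_mulC x y : qre (x * y) = qre (y * x).
Proof. by case: x => ? ? ? ?; case: y => ? ? ? ? /=; ring. Qed.

Lemma qinv_conjE x : qinv x = rq (qnorm2 x)^-1 * qconj x.
Proof. by rewrite /qinv qscaleE. Qed.

Lemma qmulVq : {in predC1 0, left_inverse 1 (@qinv R) *%R}.
Proof.
move=> x /= x0; rewrite qinv_conjE -mulrA qconj_mul rqM mulVf ?rq1 //.
by rewrite qnorm2_eq0.
Qed.
Lemma qmulqV : {in predC1 0, right_inverse 1 (@qinv R) *%R}.
Proof.
move=> x /= x0; rewrite qinv_conjE mulrA -rqC -mulrA qmul_conj rqM mulVf ?rq1 //.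
by rewrite qnorm2_eq0.
Qed.
Lemma qunitP x y : y * x = 1 /\ x * y = 1 -> x \in predC1 0.
Proof.
by case=> yx1 _; apply/eqP => x0; move: yx1; rewrite x0 mulr0 => /eqP; rewrite eq_sym oner_eq0.
Qed.
Lemma qinv_out : {in [predC predC1 0], (@qinv R) =1 id}.
Proof. by move=> x /negPn /= /eqP ->; rewrite qinv_conjE qconj0 mulr0. Qed.

HB.instance Definition _ := GRing.NzRing_hasMulInverse.Build (quat R)
  qmulVq qmulqV qunitP qinv_out.

Lemma qinvE x : qinv x = x^-1. Proof. by []. Qed.
Lemma qunitE x : (x \is a GRing.unit) = (x != 0). Proof. by []. Qed.

Lemma qconjV x : qconj x^-1 = (qconj x)^-1.
Proof.
have [->|x0] := eqVneq x 0; first by rewrite qconj0 invr0 qconj0.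
have cx0 : qconj x \is a GRing.unit by rewrite qunitE qconj_eq0.
by apply: (mulrI cx0); rewrite -qconjM mulVr ?mulrV ?qconj1.
Qed.
End QuaternionRing.

Section ImaginaryPart.
Variable R : realType.
Implicit Types x : quat R.

Lemma qImE x : qIm x = x - rq (qre x).
Proof. by case: x => ? ? ? ?; apply: quat_ext => /=; ring. Qed.
Lemma quat_decomp x : x = rq (qre x) + qIm x.
Proof. by rewrite qImE addrC subrK. Qed.
Lemma qnorm2_Im x : qnorm2 (qIm x) = qnorm2 x - qre x ^+ 2.
Proof. by case: x => a b c d; rewrite /qnorm2 /=; ring. Qed.
Lemma qscale_abs_dir x : qscale (qabs x) (qscale (qabs x)^-1 x) = x.
Proof.
have [->|x0] := eqVneq x 0; first by rewrite !qscaleE !mulr0.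
have a0 : qabs x != 0 by rewrite /qabs sqrtr_eq0 -ltNge lt_def qnorm2_eq0 x0 qnorm2_ge0.
by rewrite !qscaleE mulrA rqM mulfV // rq1 mul1r.
Qed.

Lemma qre_bound x : qnorm2 x = 1 -> -1 <= qre x <= 1.
Proof.
case: x => a b c d; rewrite /qnorm2 /= => x1.
have := sqr_ge0 b; have := sqr_ge0 c; have := sqr_ge0 d => *.
apply/andP; split; nra.
Qed.
End ImaginaryPart.

Section UnitConjugation.
Variables (R : realType) (mu : quat R).
Hypothesis mu1 : qnorm2 mu = 1.
Implicit Types x y : quat R.

Definition qconjug x := mu * x * qconj mu.

Lemma unit_mul_qconj : mu * qconj mu = 1. Proof. by rewrite qmul_conj mu1 rq1. Qed.
Lemma qconj_mul_unit : qconj mu * mu = 1. Proof. by rewrite qconj_mul mu1 rq1. Qed.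

Lemma qconjugM x y : qconjug (x * y) = qconjug x * qconjug y.
Proof. by rewrite /qconjug !mulrA -(mulrA _ (qconj mu)) qconj_mul_unit mulr1. Qed.
Lemma qconjugB x y : qconjug (x - y) = qconjug x - qconjug y.
Proof. by rewrite /qconjug mulrBr mulrBl. Qed.
Lemma qconjug0 : qconjug 0 = 0. Proof. by rewrite /qconjug mulr0 mul0r. Qed.
Lemma qconjug1 : qconjug 1 = 1. Proof. by rewrite /qconjug mulr1 unit_mul_qconj. Qed.
Lemma qconjug_rq r : qconjug (rq r) = rq r.
Proof. by rewrite /qconjug -rqC -mulrA unit_mul_qconj mulr1. Qed.
Lemma qconjug_conj x : qconjug (qconj x) = qconj (qconjug x).
Proof. by rewrite /qconjug !qconjM qconjK mulrA. Qed.
Lemma qconjug_re x : qre (qconjug x) = qre x.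
Proof. by rewrite /qconjug qre_mulC mulrA qconj_mul_unit mul1r. Qed.
Lemma qconjug_scale r x : qconjug (qscale r x) = qscale r (qconjug x).
Proof. by rewrite !qscaleE qconjugM qconjug_rq. Qed.
Lemma qconjug_Im x : qconjug (qIm x) = qIm (qconjug x).
Proof. by rewrite !qImE qconjugB qconjug_rq qconjug_re. Qed.

(* A quaternion is determined by its real part, its norm and the direction
   of its imaginary part; the latter only matters when it is nonzero. *)
Lemma quat_eq_conjug x y :
  qnorm2 y = qnorm2 x -> qre y = qre x ->
  (qIm x != 0 -> qscale (qabs (qIm y))^-1 (qIm y) =
                 qconjug (qscale (qabs (qIm x))^-1 (qIm x))) ->
  y = qconjug x.
Proof.
move=> yx_norm yx_re yx_dir.
have Im_norm : qnorm2 (qIm y) = qnorm2 (qIm x) by rewrite !qnorm2_Im yx_norm yx_re.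
rewrite (quat_decomp y) [RHS]quat_decomp qconjug_re yx_re -qconjug_Im.
congr (_ + _); have [x0|x0] := eqVneq (qIm x) 0.
  by rewrite x0 qconjug0; apply/eqP; rewrite -qnorm2_eq0 Im_norm x0 qnorm2_eq0.
rewrite -[qIm y]qscale_abs_dir yx_dir // -qconjug_scale.
by rewrite {1}/qabs Im_norm -/(qabs (qIm x)) qscale_abs_dir.
Qed.
End UnitConjugation.

Section HermitianForm.
Variables (R : realType) (n : nat).
Local Notation V := (qvec R n).
Implicit Types z w u v : V.

Definition vadd z w : V := fun i => z i + w i.
Definition vsub z w : V := fun i => z i - w i.
Definition vzero : V := fun _ => 0.

Lemma vaddE z w i : vadd z w i = z i + w i. Proof. by []. Qed.
Lemma vsubE z w i : vsub z w i = z i - w i. Proof. by []. Qed.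
Lemma vscaleE z l i : vscale z l i = z i * l. Proof. by []. Qed.

Definition mid_index := [seq i : 'I_n.+1 <- enum 'I_n.+1 | (0 < i < n)%N].

Lemma hformE z w : hform z w = qconj (w ord_max) * z ord0 +
  (\sum_(i <- mid_index) qconj (w i) * z i + qconj (w ord0) * z ord_max).
Proof. by rewrite /hform qsumE big_map. Qed.

Lemma hformDl z w u : hform (vadd z w) u = hform z u + hform w u.
Proof.
rewrite !hformE /vadd !mulrDr.
under eq_bigr => i _ do rewrite mulrDr.
rewrite big_split /=.
set a := qconj _ * z _; set b := qconj _ * w _; set c := qconj _ * z _; set d := qconj _ * w _.
by rewrite [_ + (c + d)]addrACA [LHS]addrACA.
Qed.

Lemma hformZl z l u : hform (vscale z l) u = hform z u * l.
Proof.
rewrite !hformE /vscale !mulrDl big_distrl /= !qmulE !mulrA.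
by congr (_ + (_ + _)); apply: eq_bigr => i _; rewrite mulrA.
Qed.

Lemma hform_sym z w : hform w z = qconj (hform z w).
Proof.
rewrite !hformE !qconjD qconj_sum !qconjM !qconjK.
under [in RHS]eq_bigr => i _ do rewrite qconjM qconjK.
set a := qconj (z ord_max) * w ord0; set c := qconj (z ord0) * w ord_max.
by rewrite addrCA [in RHS]addrCA [c + a]addrC.
Qed.

Lemma hformDr z w u : hform u (vadd z w) = hform u z + hform u w.
Proof. by rewrite hform_sym hformDl qconjD -!hform_sym. Qed.
Lemma hformZr z l u : hform u (vscale z l) = qconj l * hform u z.
Proof. by rewrite hform_sym hformZl qconjM -hform_sym. Qed.

Lemma vsub_vadd z w : vsub z w = vadd z (vscale w (-1)).
Proof. by apply: funext => i; rewrite /vsub /vadd /vscale qmulE mulrN1. Qed.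
Lemma hformBl z w u : hform (vsub z w) u = hform z u - hform w u.
Proof. by rewrite vsub_vadd hformDl hformZl mulrN1. Qed.
Lemma hformBr z w u : hform u (vsub z w) = hform u z - hform u w.
Proof. by rewrite vsub_vadd hformDr hformZr qconjN qconj1 mulN1r. Qed.
End HermitianForm.

Section NullVectors.
Variables (R : realType) (n : nat).
Local Notation V := (qvec R n).
Implicit Types z w v : V.

Lemma qre_conj_self (x : quat R) : qre (qconj x * x) = qnorm2 x.
Proof. by rewrite qconj_mul. Qed.

Lemma qre_hform_self v : qre (hform v v) = qre (qconj (v ord_max) * v ord0) +
  \sum_(i <- mid_index n) qnorm2 (v i) + qre (qconj (v ord0) * v ord_max).
Proof.
rewrite hformE addrA; congr (_ + _ + _).
by elim: (mid_index n) => [|i s IH]; rewrite ?big_nil ?big_cons //= IH qre_conj_self.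
Qed.

(* With equal end coordinates the form is a sum of squared norms. *)
Lemma null_vec_eq0 v : hform v v = 0 -> v ord0 = v ord_max -> forall i, v i = 0.
Proof.
move=> null_v ends.
have := qre_hform_self v; rewrite null_v -ends qre_conj_self /= => re0.
have S0 : 0 <= \sum_(i <- mid_index n) qnorm2 (v i) by apply: sumr_ge0 => *; exact: qnorm2_ge0.
have := qnorm2_ge0 (v ord0) => N0.
have v0 : v ord0 = 0 by apply/eqP; rewrite -qnorm2_eq0; apply/eqP; lra.
move=> i; have [->|i0] := eqVneq i ord0; first exact: v0.
have [->|in_] := eqVneq i ord_max; first by rewrite -ends.
have : i \in mid_index n.
  rewrite mem_filter mem_enum andbT lt0n ltn_neqAle -ltnS ltn_ord andbT.
  by move: i0 in_; rewrite -!(inj_eq val_inj) => -> ->.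
have /eqP : \sum_(i <- mid_index n) qnorm2 (v i) = 0 by lra.
rewrite psumr_eq0 => [/allP mid0 /mid0 /=|j _]; last exact: qnorm2_ge0.
by rewrite qnorm2_eq0 => /eqP.
Qed.

(* Subtracting the multiple of [w] that equalises the end coordinates
   leaves a null vector to which [null_vec_eq0] applies. *)
Lemma null_orthogonal_proportional z w : hform z z = 0 -> hform w w = 0 ->
  vnonzero w -> hform z w = 0 -> exists l, z = vscale w l.
Proof.
move=> null_z null_w [k wk] zw.
have w_ends : w ord0 - w ord_max != 0.
  apply/eqP => ends; apply: wk; apply: (null_vec_eq0 null_w).
  by apply/eqP; rewrite -subr_eq0 ends.
set l := (w ord0 - w ord_max)^-1 * (z ord0 - z ord_max).
exists l; set v := vsub z (vscale w l).
have null_v : hform v v = 0.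
  rewrite !(hformBl, hformBr, hformZl, hformZr) null_z null_w zw hform_sym zw qconj0.
  by rewrite !(mulr0, mul0r, subr0).
have v_ends : v ord0 = v ord_max.
  have regroup (a b c e : quat R) : a - b - (c - e) = a - c - (b - e).
    by rewrite !opprB !addrA [a - b + e]addrAC [a - c + e]addrAC [RHS]addrAC.
  apply/eqP; rewrite -subr_eq0 /v /vsub /vscale !qmulE regroup -mulrBl.
  by rewrite /l mulrA mulrV ?qunitE // mul1r subrr.
apply: funext => i; apply/eqP; rewrite -subr_eq0.
by have := null_vec_eq0 null_v v_ends i; rewrite /v /vsub => ->.
Qed.

Lemma hform_neq0_distinct z w :
  null_lift z -> null_lift w -> ~ same_point w z -> hform z w != 0.
Proof.
move=> [[k zk] null_z] [nz_w null_w] wz; apply/eqP => zw.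
have [l zE] := null_orthogonal_proportional null_z null_w nz_w zw.
apply: wz; exists l; split=> // l0; apply: zk.
by rewrite zE /vscale l0 qmulE mulr0.
Qed.

Lemma hform_neq0_vnonzero z w : hform z w != 0 -> vnonzero z.
Proof.
move=> zw; apply: contrapT => z0; move/eqP: zw; apply.
have -> : z = vscale z 0.
  by apply: funext => i; rewrite vscaleE mulr0; apply: contrapT => zi; apply: z0; exists i.
by rewrite hformZl mulr0.
Qed.

Lemma boundary_tuple_null m (X : nat -> V) a :
  distinct_boundary_tuple m X -> (a < m)%N -> hform (X a) (X a) = 0.
Proof. by move=> X_tuple am; case: (X_tuple.1 a am). Qed.

Lemma boundary_tuple_hform_neq0 m (X : nat -> V) a b : distinct_boundary_tuple m X ->
  (a < m)%N -> (b < m)%N -> a <> b -> hform (X a) (X b) != 0.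
Proof.
move=> X_tuple am bm ab; apply: hform_neq0_distinct; try exact: X_tuple.1.
exact: X_tuple.2 bm am (nesym ab).
Qed.
End NullVectors.

Section Isometries.
Variables (R : realType) (n : nat).
Local Notation V := (qvec R n).
Implicit Types (z w : V) (f g : V -> V).

Definition rlinear f :=
  (forall z w, f (vadd z w) = vadd (f z) (f w)) /\
  (forall z l, f (vscale z l) = vscale (f z) l).

Definition form_isometry f :=
  [/\ rlinear f, (forall z w, hform (f z) (f w) = hform z w) &
      exists2 g, rlinear g & cancel f g /\ cancel g f].

Definition vsum (s : seq 'I_n.+1) (F : 'I_n.+1 -> V) : V :=
  foldr (fun j acc => vadd (F j) acc) (@vzero R n) s.

Definition evec (j : 'I_n.+1) : V := fun k => if k == j then 1 else 0.

Lemma vsumE s F i : vsum s F i = \sum_(j <- s) F j i.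
Proof. by elim: s => [|j s IH]; rewrite ?big_nil ?big_cons //= /vadd IH. Qed.

Lemma rlinear0 f : rlinear f -> f (@vzero R n) = @vzero R n.
Proof.
have zeroE : @vzero R n = vscale (@vzero R n) 0.
  by apply: funext => i; rewrite /vscale qmulE mulr0.
by case=> _ fZ; rewrite {1}zeroE fZ; apply: funext => i; rewrite /vscale qmulE mulr0.
Qed.

Lemma rlinear_vsum f s F : rlinear f -> f (vsum s F) = vsum s (fun j => f (F j)).
Proof. by move=> lf; elim: s => [|j s IH] /=; rewrite ?rlinear0 // lf.1 IH. Qed.

Lemma vec_decomp z : z = vsum (enum 'I_n.+1) (fun j => vscale (evec j) (z j)).
Proof.
apply: funext => i; rewrite vsumE big_enum /= (bigD1 i) //= big1 => [|j ji].
  by rewrite /vscale /evec eqxx qmulE mul1r addr0.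
by rewrite /vscale /evec eq_sym (negbTE ji) qmulE mul0r.
Qed.

Lemma rlinear_mact f : rlinear f -> exists M : qmat R n, forall z, mact M z = f z.
Proof.
move=> lf; exists (fun i j => f (evec j) i) => z.
rewrite [in RHS](vec_decomp z) rlinear_vsum //; apply: funext => i.
rewrite vsumE /mact qsumE big_map; apply: eq_bigr => j _.
by rewrite lf.2.
Qed.

Lemma form_isometry_comp f g :
  form_isometry f -> form_isometry g -> form_isometry (f \o g).
Proof.
move=> [[fD fZ] f_iso [f' [f'D f'Z] [fK f'K]]] [[gD gZ] g_iso [g' [g'D g'Z] [gK g'K]]].
split=> [|z w|]; first by split=> *; rewrite /= ?gD ?fD ?gZ ?fZ.
  by rewrite /= f_iso g_iso.
exists (g' \o f'); first by split=> *; rewrite /= ?f'D ?g'D ?f'Z ?g'Z.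
by split; apply: can_comp.
Qed.

Lemma form_isometry_Sp f :
  form_isometry f -> exists2 M : qmat R n, in_Sp M & forall z, mact M z = f z.
Proof.
move=> [lf f_iso [g lg [fK gK]]].
have [M ME] := rlinear_mact lf; have [B BE] := rlinear_mact lg.
exists M => //; split=> [z w|]; first by rewrite !ME.
by exists B => z; rewrite !ME !BE fK gK.
Qed.
End Isometries.

Section Transvections.
Variables (R : realType) (n : nat).
Local Notation V := (qvec R n).
Implicit Types (u v w x y d : V) (b c : quat R).

Definition transvection d b v : V := vadd v (vscale d (b * hform v d)).

Lemma transvection_rlinear d b : rlinear (transvection d b).
Proof.
split=> [z w|z l]; apply: funext => i; rewrite /transvection.
  rewrite hformDl !(vaddE, vscaleE); move: (hform z d) (hform w d) => a a'.
  by rewrite !mulrDr addrACA.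
rewrite hformZl !(vaddE, vscaleE); move: (hform z d) => a.
by rewrite mulrDl !mulrA.
Qed.

Lemma transvection_comp d b c v :
  transvection d b (transvection d c v) = transvection d (c + b + b * hform d d * c) v.
Proof.
apply: funext => i; rewrite /transvection hformDl hformZl !(vaddE, vscaleE).
move: (hform v d) (hform d d) => a N.
by rewrite -addrA; congr (_ + _); rewrite !mulrDl !mulrDr !mulrA addrA.
Qed.

Lemma transvection0 d v : transvection d 0 v = v.
Proof. by apply: funext => i; rewrite /transvection !(vaddE, vscaleE) !mul0r mulr0 addr0. Qed.

Lemma transvection_fix d b u : hform u d = 0 -> transvection d b u = u.
Proof.
by move=> ud; apply: funext => i; rewrite /transvection ud !(vaddE, vscaleE) !mulr0 addr0.
Qed.

Lemma transvection_hform d b v w :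
  qconj b + b + qconj b * hform d d * b = 0 ->
  hform (transvection d b v) (transvection d b w) = hform v w.
Proof.
rewrite /transvection hformDl !hformDr !hformZl !hformZr qconjM -(hform_sym w d).
move: (hform d w) (hform v d) (hform d d) => D a N b_iso.
rewrite -addrA; have -> : D * qconj b * a + (D * (b * a) + D * qconj b * N * (b * a))
    = D * (qconj b + b + qconj b * N * b) * a.
  by rewrite !mulrDr !mulrDl !mulrA !addrA.
by rewrite b_iso mulr0 mul0r addr0.
Qed.

Lemma transvection_isometry d b :
  qconj b + b + qconj b * hform d d * b = 0 -> form_isometry (transvection d b).
Proof.
move=> b_iso.
have dd_real : hform d d = rq (qre (hform d d)) by apply: qconj_real; rewrite -hform_sym.
have fK : b + qconj b + qconj b * hform d d * b = 0 by rewrite [b + _]addrC.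
have gK : qconj b + b + b * hform d d * qconj b = 0.
  by move: b_iso; rewrite dd_real -!rqC -!mulrA qmul_conj qconj_mul.
split; [exact: transvection_rlinear | by move=> v w; apply: transvection_hform |].
exists (transvection d (qconj b)); first exact: transvection_rlinear.
by split=> v; rewrite transvection_comp ?fK ?gK transvection0.
Qed.

Definition null_swap x y := transvection (vsub x y) (hform x y)^-1.

Lemma null_swap_isometry x y : hform x x = 0 -> hform y y = 0 -> hform x y != 0 ->
  form_isometry (null_swap x y).
Proof.
move=> null_x null_y xy0; apply: transvection_isometry.
have yx0 : hform y x != 0 by rewrite hform_sym qconj_eq0.
rewrite qconjV -hform_sym hformBl !hformBr null_x null_y.
move: (hform x y) (hform y x) xy0 yx0 => c c' c0 c'0.
rewrite sub0r subr0 -opprD mulrN mulNr mulrDr mulrDl -mulrA.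
by rewrite mulrV ?mulVr ?qunitE // mulr1 mul1r subrr.
Qed.

Lemma null_swap_map x y : hform x x = 0 -> hform x y != 0 -> null_swap x y x = y.
Proof.
move=> null_x xy0; apply: funext => i.
rewrite /null_swap /transvection vaddE vscaleE hformBr null_x sub0r mulrN mulVr ?qunitE //.
by rewrite mulrN1 vsubE opprB addrC subrK.
Qed.

Lemma null_swap_fix x y u : hform u x = hform u y -> null_swap x y u = u.
Proof. by move=> uxy; apply: transvection_fix; rewrite hformBr uxy subrr. Qed.

Lemma null_transitive x y w : hform x x = 0 -> hform y y = 0 -> hform w w = 0 ->
  vnonzero x -> vnonzero y -> hform y w != 0 ->
  exists2 f, form_isometry f & f x = y.
Proof.
move=> null_x null_y null_w [i xi] nz_y yw.
have [xy0|xy] := eqVneq (hform x y) 0; last first.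
  by exists (null_swap x y); [exact: null_swap_isometry | exact: null_swap_map].
have [l xE] := null_orthogonal_proportional null_x null_y nz_y xy0.
have l0 : l != 0 by apply/eqP => l0; apply: xi; rewrite xE vscaleE l0 mulr0.
have xw : hform x w != 0 by rewrite xE hformZl -qunitE unitrMl qunitE.
have wy : hform w y != 0 by rewrite hform_sym qconj_eq0.
exists (null_swap w y \o null_swap x w).
  by apply: form_isometry_comp; apply: null_swap_isometry.
by rewrite /= null_swap_map // null_swap_map.
Qed.
End Transvections.

Section WittExtension.
Variables (R : realType) (n m : nat) (X Y : nat -> qvec R n).
Hypotheses (m2 : (2 <= m)%N) (Y_tuple : distinct_boundary_tuple m Y)
  (gramXY : forall a b, (a < m)%N -> (b < m)%N -> hform (X a) (X b) = hform (Y a) (Y b)).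

Lemma X_null a : (a < m)%N -> hform (X a) (X a) = 0.
Proof. by move=> am; rewrite gramXY // (boundary_tuple_null Y_tuple). Qed.

Lemma witt_base : exists2 f, form_isometry f & f (X 0%N) = Y 0%N.
Proof.
have m0 : (0 < m)%N := ltnW m2.
have Y01 : hform (Y 0%N) (Y 1) != 0 by exact: (boundary_tuple_hform_neq0 Y_tuple).
have X0 : vnonzero (X 0%N) by apply: (@hform_neq0_vnonzero _ _ _ (X 1)); rewrite gramXY.
apply: (null_transitive (X_null m0) _ (boundary_tuple_null Y_tuple m2) X0 _ Y01).
  exact: boundary_tuple_null Y_tuple m0.
exact: (Y_tuple.1 0%N m0).1.
Qed.

Lemma witt_step k f : (0 < k < m)%N -> form_isometry f ->
    (forall i, (i < k)%N -> f (X i) = Y i) ->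
  exists2 g, form_isometry g & forall i, (i < k.+1)%N -> g (X i) = Y i.
Proof.
move=> /andP [k0 km] f_iso fXY; have [_ f_hform _] := f_iso.
set x := f (X k); set y := Y k.
have null_x : hform x x = 0 by rewrite f_hform X_null.
have Yx : forall i, (i < k)%N -> hform (Y i) x = hform (Y i) y.
  by move=> i ik; rewrite -{1}(fXY i ik) f_hform gramXY // (ltn_trans ik km).
have [xy0|xy] := eqVneq (hform x y) 0; last first.
  exists (null_swap x y \o f).
    apply: form_isometry_comp => //.
    by apply: null_swap_isometry; rewrite ?(boundary_tuple_null Y_tuple).
  move=> i; rewrite ltnS leq_eqVlt => /predU1P [->|ik]; first exact: null_swap_map.
  by rewrite /= fXY // null_swap_fix // Yx.
(* Orthogonal null vectors are proportional, and the factor is 1 because [x] and [y]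
   pair equally with [Y 0]. *)
exists f => // i; rewrite ltnS leq_eqVlt => /predU1P [->|]; last exact: fXY.
have [null_y nz_y] := (boundary_tuple_null Y_tuple km, (Y_tuple.1 k km).1).
have [l xE] := null_orthogonal_proportional null_x null_y nz_y xy0.
have yY0 : hform y (Y 0%N) != 0.
  apply: (boundary_tuple_hform_neq0 Y_tuple) => [||k_eq0] //; first exact: ltn_trans km.
  by rewrite k_eq0 in k0.
have l1 : l = 1.
  apply: (mulrI (x := hform y (Y 0%N))); rewrite ?qunitE // mulr1.
  by rewrite -hformZl -xE hform_sym Yx // -hform_sym.
by rewrite -/x xE l1; apply: funext => j; rewrite vscaleE mulr1.
Qed.

Lemma witt_extension : exists2 f, form_isometry f & forall i, (i < m)%N -> f (X i) = Y i.
Proof.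
suff witt_upto k : (0 < k <= m)%N ->
    exists2 f, form_isometry f & forall i, (i < k)%N -> f (X i) = Y i.
  by apply: witt_upto; rewrite leqnn andbT ltnW.
elim: k => [//|[_ _|k IH /andP [_ km]]].
  by have [f f_iso fX0] := witt_base; exists f => // i; rewrite ltnS leqn0 => /eqP->.
by have [f f_iso fXY] := IH (ltnW km); apply: (witt_step (f := f)); rewrite ?km.
Qed.
End WittExtension.

Lemma vscale_conj_unitK (R : realType) n (z : qvec R n) (mu : quat R) :
  qnorm2 mu = 1 -> vscale (vscale z (qconj mu)) mu = z.
Proof. by move=> mu1; apply: funext => i; rewrite !vscaleE -mulrA qconj_mul_unit ?mulr1. Qed.

Lemma gram_conjug_psp_congruent (R : realType) n m (P Q : nat -> qvec R n) (mu : quat R) :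
  (2 <= m)%N -> distinct_boundary_tuple m Q -> qnorm2 mu = 1 ->
  (forall a b, (a < m)%N -> (b < m)%N -> hform (Q a) (Q b) = qconjug mu (hform (P a) (P b))) ->
  psp_congruent m P Q.
Proof.
move=> m2 Q_tuple mu1 gram_PQ; pose X i := vscale (P i) (qconj mu).
have gramXQ a b : (a < m)%N -> (b < m)%N -> hform (X a) (X b) = hform (Q a) (Q b).
  by move=> am bm; rewrite hformZl hformZr qconjK gram_PQ.
have [f f_iso fXQ] := witt_extension m2 Q_tuple gramXQ.
have [M M_Sp ME] := form_isometry_Sp f_iso; have [[_ fZ] _ _] := f_iso.
have cmu0 : qconj mu != 0 by rewrite qconj_eq0 -qnorm2_eq0 mu1 oner_neq0.
exists M; split=> // i im; exists (qconj mu); split; first exact/eqP.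
apply: funext => k; rewrite -[P i](vscale_conj_unitK _ mu1) ME fZ fXQ //.
by rewrite !vscaleE -mulrA unit_mul_qconj ?mulr1.
Qed.

Section CrossRatios.
Variables (R : realType) (n : nat).
Local Notation V := (qvec R n).
Implicit Types z : V.

Lemma hform_cross_ratio z1 z2 z3 z4 : hform z3 z1 = 1 -> hform z4 z1 = 1 ->
  hform z3 z2 != 0 -> hform z4 z2 = hform z3 z2 * cross_ratio z1 z2 z3 z4.
Proof.
move=> z31 z41 z32; rewrite /cross_ratio z31 z41 !qmulE !qinvE invr1 mulr1 mul1r.
by rewrite mulrA mulrV ?qunitE // mul1r.
Qed.
End CrossRatios.

Section SemiNormalizedGram.
Variables (R : realType) (n m : nat) (X : nat -> qvec R n).
Hypotheses (m4 : (4 <= m)%N) (X_sn : semi_normalized m X).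

Lemma hform_X_X0 a : (0 < a < m)%N -> hform (X a) (X 0) = 1.
Proof. by move=> am; apply: X_sn.1 a.+1 am. Qed.

Lemma hform_X0_X a : (0 < a < m)%N -> hform (X 0) (X a) = 1.
Proof. by move=> am; rewrite hform_sym hform_X_X0 // qconj1. Qed.

Lemma gram23_norm2 : qnorm2 (gram X 2 3) = 1.
Proof. exact/qnorm2_qabs1/X_sn.2. Qed.

Lemma cos_A23 : cos (A23 X) = - qre (gram X 2 3).
Proof.
have tripleE : triple (X 0) (X 1) (X 2) = qconj (gram X 2 3).
  have [m1 m2] : (0 < 1 < m)%N /\ (0 < 2 < m)%N by lia.
  rewrite /triple (hform_X0_X m1) (hform_X_X0 m2) !qmulE mul1r mulr1.
  by rewrite /gram -hform_sym.
rewrite /A23 tripleE /qabs qnorm2_conj gram23_norm2 sqrtr1 divr1.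
have -> : qre (qopp (qconj (gram X 2 3))) = - qre (gram X 2 3) by [].
move: (qre_bound gram23_norm2); move: (qre (gram X 2 3)) => r r_bound.
by rewrite acosK // in_itv /=; apply/andP; split; lra.
Qed.

Lemma A23_eq0_Im : A23 X = 0 -> qIm (gram X 2 3) = 0.
Proof.
move=> A0; apply/eqP; rewrite -qnorm2_eq0 qnorm2_Im gram23_norm2.
have := cos_A23; rewrite A0 cos0 => re_g.
have -> : qre (gram X 2 3) = -1 by lra.
by rewrite sqrrN expr1n subrr.
Qed.
End SemiNormalizedGram.

Lemma eq_map_iota (T U : Type) (F : nat -> U) (f : T -> U) (G : nat -> T) a k :
  [seq F j | j <- iota a k] = map f [seq G j | j <- iota a k] ->
  forall j, (a <= j < a + k)%N -> F j = f (G j).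
Proof. by rewrite -map_comp => /eq_in_map FG j; rewrite -mem_iota; apply: FG. Qed.

Lemma eq_flatten_map (T U : Type) (F : nat -> nat -> U) (f : T -> U) (G : nat -> nat -> T)
    (s : seq nat) (t : nat -> seq nat) :
  flatten [seq [seq F k j | j <- t k] | k <- s] =
    map f (flatten [seq [seq G k j | j <- t k] | k <- s]) ->
  forall k j, k \in s -> j \in t k -> F k j = f (G k j).
Proof.
rewrite map_flatten -map_comp => FG k j ks jt.
have shapeE : shape [seq [seq F k j | j <- t k] | k <- s] =
              shape [seq (map f \o (fun k => [seq G k j | j <- t k])) k | k <- s].
  by rewrite /shape -!map_comp; apply: eq_map => i /=; rewrite !size_map.
have /eq_in_map/(_ k ks) /= := eq_from_flatten_shape FG shapeE.
by rewrite -map_comp => /eq_in_map/(_ j jt).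
Qed.

Section Sp1CongruentInvariants.
Variables (R : realType) (n m : nat) (P Q : nat -> qvec R n).

Lemma sp1_congruent_Finv : sp1_congruent (Finv m P) (Finv m Q) ->
  exists mu : quat R, [/\ qnorm2 mu = 1, u0 Q = qconjug mu (u0 P),
    forall j, (3 <= j < m)%N -> cross_ratio (Q 0) (Q 1) (Q 2) (Q j) =
                               qconjug mu (cross_ratio (P 0) (P 1) (P 2) (P j)),
    forall j, (3 <= j < m)%N -> cross_ratio (Q 0) (Q 2) (Q 1) (Q j) =
                               qconjug mu (cross_ratio (P 0) (P 2) (P 1) (P j)) &
    forall k j, (3 <= k)%N -> (k < j < m)%N -> cross_ratio (Q 0) (Q k) (Q 1) (Q j) =
                               qconjug mu (cross_ratio (P 0) (P k) (P 1) (P j))].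
Proof.
move=> [mu [/qnorm2_qabs1 mu1]]; rewrite /Finv map_cons !map_cat.
case=> E0 /eqP; rewrite eqseq_cat ?size_map // => /andP [/eqP E1].
rewrite eqseq_cat ?size_map // => /andP [/eqP E2 /eqP E3].
have iota3 j : (3 <= j < m)%N -> (3 <= j < 3 + (m - 3))%N by lia.
exists mu; split=> // [j /iota3|j /iota3|k j k3 kjm].
- exact: eq_map_iota E1 j.
- exact: eq_map_iota E2 j.
- by apply: (eq_flatten_map E3); rewrite mem_iota; lia.
Qed.
End Sp1CongruentInvariants.

Section InvariantsDetermineGram.
Variables (R : realType) (n m : nat) (P Q : nat -> qvec R n) (mu : quat R).
Hypotheses (m4 : (4 <= m)%N)
  (P_tuple : distinct_boundary_tuple m P) (Q_tuple : distinct_boundary_tuple m Q)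
  (P_sn : semi_normalized m P) (Q_sn : semi_normalized m Q) (mu1 : qnorm2 mu = 1)
  (u0_PQ : u0 Q = qconjug mu (u0 P))
  (cr123_PQ : forall j, (3 <= j < m)%N -> cross_ratio (Q 0) (Q 1) (Q 2) (Q j) =
                                   qconjug mu (cross_ratio (P 0) (P 1) (P 2) (P j)))
  (cr132_PQ : forall j, (3 <= j < m)%N -> cross_ratio (Q 0) (Q 2) (Q 1) (Q j) =
                                   qconjug mu (cross_ratio (P 0) (P 2) (P 1) (P j)))
  (cr1k2_PQ : forall k j, (3 <= k)%N -> (k < j < m)%N -> cross_ratio (Q 0) (Q k) (Q 1) (Q j) =
                                   qconjug mu (cross_ratio (P 0) (P k) (P 1) (P j)))
  (A23_PQ : A23 P = A23 Q).

Lemma gram23_conjug : gram Q 2 3 = qconjug mu (gram P 2 3).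
Proof.
have re_PQ : qre (gram Q 2 3) = qre (gram P 2 3).
  by have := cos_A23 m4 P_sn; rewrite A23_PQ (cos_A23 m4 Q_sn) => /oppr_inj.
apply: quat_eq_conjug; rewrite // ?(gram23_norm2 P_sn) ?(gram23_norm2 Q_sn) // => ImP0.
have A23P : A23 P != 0 := contra_neq (A23_eq0_Im m4 P_sn) ImP0.
by move: u0_PQ; rewrite /u0 -A23_PQ A23P.
Qed.

Definition gram_entry_conjug a b := hform (Q a) (Q b) = qconjug mu (hform (P a) (P b)).

Lemma gram_entry_conjug_sym a b : gram_entry_conjug a b -> gram_entry_conjug b a.
Proof.
rewrite /gram_entry_conjug (hform_sym (Q a)) (hform_sym (P a)) => ->.
by rewrite qconjug_conj.
Qed.

Lemma gram_entry_conjug_cross b c j : (0 < c < m)%N -> (0 < j < m)%N -> (b < m)%N ->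
  c <> b -> gram_entry_conjug c b ->
  cross_ratio (Q 0) (Q b) (Q c) (Q j) = qconjug mu (cross_ratio (P 0) (P b) (P c) (P j)) ->
  gram_entry_conjug j b.
Proof.
move=> cm jm bm cb entry_cb cr_PQ; have c_lt_m : (c < m)%N by case/andP: cm.
have cross X : distinct_boundary_tuple m X -> semi_normalized m X ->
    hform (X j) (X b) = hform (X c) (X b) * cross_ratio (X 0) (X b) (X c) (X j).
  move=> X_tuple X_sn; apply: hform_cross_ratio; rewrite ?(hform_X_X0 X_sn) //.
  exact: boundary_tuple_hform_neq0 X_tuple c_lt_m bm cb.
by rewrite /gram_entry_conjug !cross // entry_cb cr_PQ qconjugM.
Qed.

Lemma gram_entry_conjug_all a b : (a < m)%N -> (b < m)%N -> gram_entry_conjug a b.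
Proof.
wlog ba : a b / (b <= a)%N => [wlog_ab am bm|].
  by case: (leqP b a) => [ba|/ltnW ab]; [apply: wlog_ab | apply/gram_entry_conjug_sym/wlog_ab].
move=> am bm; case: (ltngtP b a) ba => // [ba _|<- _]; last first.
  rewrite /gram_entry_conjug (boundary_tuple_null P_tuple bm).
  by rewrite (boundary_tuple_null Q_tuple bm) qconjug0.
have entry21 : gram_entry_conjug 2 1 := gram23_conjug.
have entry_j1 j : (3 <= j < m)%N -> gram_entry_conjug j 1.
  by move=> jm; apply: (gram_entry_conjug_cross (c := 2)) => //; try lia; apply: cr123_PQ.
case: b ba bm => [|[|[|k]]] ba bm.
- by rewrite /gram_entry_conjug (hform_X_X0 Q_sn) ?(hform_X_X0 P_sn) ?qconjug1 //; lia.
- by case: a ba am => [|[|[|a]]] // ba am; apply: entry_j1; lia.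
- apply: (gram_entry_conjug_cross (c := 1)) => //; try lia.
    exact: gram_entry_conjug_sym.
  by apply: cr132_PQ; lia.
- apply: (gram_entry_conjug_cross (c := 1)) => //; try lia.
    by apply/gram_entry_conjug_sym/entry_j1; lia.
  by apply: cr1k2_PQ; lia.
Qed.
End InvariantsDetermineGram.

Lemma sp1_congruent_gram (R : realType) n m (P Q : nat -> qvec R n) :
  (4 <= m)%N -> distinct_boundary_tuple m P -> distinct_boundary_tuple m Q ->
  semi_normalized m P -> semi_normalized m Q ->
  sp1_congruent (Finv m P) (Finv m Q) -> A23 P = A23 Q ->
  exists2 mu : quat R, qnorm2 mu = 1 & forall a b, (a < m)%N -> (b < m)%N ->
    hform (Q a) (Q b) = qconjug mu (hform (P a) (P b)).
Proof.
move=> m4 P_tuple Q_tuple P_sn Q_sn /sp1_congruent_Finv [mu [mu1 u0_PQ cr123 cr132 cr1k2]] A23_PQ.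
by exists mu => // a b; apply: gram_entry_conjug_all.
Qed.

Unset Implicit Arguments.
Theorem corollary1p6 (R : realType) (n m : nat) (P Q : nat -> qvec R n) :
  (1 <= n)%N -> (4 <= m)%N ->
  distinct_boundary_tuple m P -> distinct_boundary_tuple m Q ->
  semi_normalized m P -> semi_normalized m Q ->
  sp1_congruent (Finv m P) (Finv m Q) ->
  A23 P = A23 Q ->
  psp_congruent m P Q.
Proof.
move=> _ m4 P_tuple Q_tuple P_sn Q_sn F_PQ A23_PQ.
have [mu mu1 gram_PQ] := sp1_congruent_gram m4 P_tuple Q_tuple P_sn Q_sn F_PQ A23_PQ.
exact: gram_conjug_psp_congruent (ltnW (ltnW m4)) Q_tuple mu1 gram_PQ.
Qed.
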